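(* In the troll-farm voting model described in the context, let $(F_0,F_1)$ and $(\hat F_0,\hat F_1)$ be two information structures (both satisfying the model's assumptions), and let $V_\theta^*$ and $\hat V_\theta^*$ denote the government's vote share in state $\theta$ under the sender's optimal strategy under $(F_0,F_1)$ and $(\hat F_0,\hat F_1)$ respectively. If $(\hat F_0,\hat F_1)$ is more informative than $(F_0,F_1)$, then $\hat V_\theta^*\ge V_\theta^*$ for each $\theta\in\{0,1\}$.
   Context: Model. There is an unknown state $\theta\in\{0,1\}$, each state having prior probability $\tfrac12$. There is a continuum of voters of mass one; each voter has a type $x\in\mathbb{R}$, types being distributed according to a cdf $H$ with density $h$ having full support on $\mathbb{R}$. A voter of type $x$ who votes for the government receives payoff $1-x$ if $\theta=1$ and $-x$ if $\theta=0$; voting against gives payoff $0$. An information structure is a pair $(F_0,F_1)$: in state $\theta$, each voter independently draws an informative signal $s\in\mathbb{R}$ from the cdf $F_\theta$, which has a density $f_\theta$ with full support on $\mathbb{R}$, where $f_0(0)=f_1(0)$ and the likelihood ratio $m(s)=f_1(s)/f_0(s)$ is strictly increasing. For $x\in(0,1)$ let $s^*(x)=m^{-1}\!\left(\frac{x}{1-x}\right)$. A sender chooses, for each type $x$, a number $\alpha_x\in[0,1]$ (mass of trolls) and a probability distribution $\tilde F_x$ on $\mathbb{R}$ with density $\tilde f_x$ (trolls' messages, not depending on the state). A voter of type $x$ observes, with probability $1-\alpha_x$, her informative signal, and with probability $\alpha_x$ a message drawn from $\tilde F_x$, without knowing which. After observing $s$ her posterior that $\theta=1$ is $$\pi_x(s)=\frac{(1-\alpha_x)f_1(s)+\alpha_x\tilde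 f_x(s)}{(1-\alpha_x)f_1(s)+\alpha_x\tilde f_x(s)+(1-\alpha_x)f_0(s)+\alpha_x\tilde f_x(s)},$$ and she votes for the government iff $\pi_x(s)\ge x$. Her probability of voting for the government in state $\theta$ is $p_\theta(x)=\int_{\{s:\pi_x(s)\ge x\}}[(1-\alpha_x)f_\theta(s)+\alpha_x\tilde f_x(s)]\,ds$, and the vote share is $V_\theta=\int p_\theta(x)\,dH(x)$. The sender's payoff is $u(V_\theta)$, $u$ strictly increasing; she maximises $\tfrac12u(V_0)+\tfrac12u(V_1)$, and among choices yielding the same vote shares in both states she strictly prefers $(\alpha_x,\tilde F_x)_x$ over $(\alpha'_x,\tilde F'_x)_x$ whenever $\alpha_x\le\alpha'_x$ for all $x$ with strict inequality for some $x$. Under the optimal strategy the vote shares are $V_0^*=H(\tfrac12)+\int_{1/2}^{1}\frac{F_0[s^*(x)]-F_1[s^*(x)]}{xF_0[s^*(x)]-(1-x)F_1[s^*(x)]}(1-x)\,dH(x)$ and $V_1^*=H(\tfrac12)+\int_{1/2}^{1}\frac{F_0[s^*(x)]-F_1[s^*(x)]}{xF_0[s^*(x)]-(1-x)F_1[s^*(x)]}\,x\,dH(x)$. Definition (informativeness): $(\hat F_0,\hat F_1)$ is more informative than $(F_0,F_1)$ iff for all $x\in(0,1)$, $\hat F_0[\hat s^*(x)]\ge F_0[s^*(x)]$ and $\hat F_1[\hat s^*(x)]\le F_1[s^*(x)]$, where $\hat s^*(x)=\hat m^{-1}\!\left(\frac{x}{1-x}\right)$ with $\hat m=\hat f_1/\hat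 f_0$. *)

From HB Require Import structures.
From mathcomp Require Import all_boot all_order all_algebra.
From mathcomp Require Import all_classical all_reals all_analysis.
Set Implicit Arguments. Unset Strict Implicit. Unset Printing Implicit Defensive.
Import Order.TTheory GRing.Theory Num.Theory.
Local Open Scope classical_set_scope.
Local Open Scope ring_scope.

Section TrollDefs.
Variable R : realType.
Local Notation mu := (@lebesgue_measure R).

Definition cdf_with_density (G g : R -> R) : Prop :=
  [/\ measurable_fun setT g,
      (forall x, 0 < g x),
      (\int[mu]_(x in [set: R]) (g x)%:E = 1)%E
    & (forall x, (G x)%:E = (\int[mu]_(y in `]-oo, x]) (g y)%:E)%E)].

Definition lik_ratio (f0 f1 : R -> R) (s : R) : R := f1 s / f0 s.

Definition info_structure (F0 F1 f0 f1 : R -> R) : Prop :=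
  [/\ cdf_with_density F0 f0, cdf_with_density F1 f1,
      f0 0 = f1 0
    & {homo lik_ratio f0 f1 : a b / a < b}].

Definition is_sstar (f0 f1 : R -> R) (sstar : R -> R) : Prop :=
  forall x, 0 < x < 1 -> lik_ratio f0 f1 (sstar x) = x / (1 - x).

Definition ratio_term (F0 F1 sstar : R -> R) (x : R) : R :=
  (F0 (sstar x) - F1 (sstar x)) / (x * F0 (sstar x) - (1 - x) * F1 (sstar x)).

(* Vote shares under the optimal strategy (formulas given in the model);
   the integral against dH is written with the density h. *)
Definition Vstar0 (H h F0 F1 sstar : R -> R) : \bar R :=
  ((H (2^-1))%:E + \int[mu]_(x in [set x : R | (2^-1 < x < 1)%R])
      (ratio_term F0 F1 sstar x * (1 - x) * h x)%:E)%E.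

Definition Vstar1 (H h F0 F1 sstar : R -> R) : \bar R :=
  ((H (2^-1))%:E + \int[mu]_(x in [set x : R | (2^-1 < x < 1)%R])
      (ratio_term F0 F1 sstar x * x * h x)%:E)%E.

Definition more_informative (Fh0 Fh1 sh F0 F1 s : R -> R) : Prop :=
  forall x, 0 < x < 1 -> F0 (s x) <= Fh0 (sh x) /\ Fh1 (sh x) <= F1 (s x).

End TrollDefs.

(* Write a = F0(s*(x)) and b = F1(s*(x)).  For x > 1/2 the factor
   (a - b) / (x a - (1 - x) b) is nondecreasing in a and nonincreasing in b as
   long as the denominators stay positive, and a more informative structure
   raises a and lowers b.  The denominators are positive because the monotone
   likelihood ratio gives F1(c) < m(c) F0(c), and m(s*(x)) = x / (1 - x).
   The vote shares are then compared pointwise under the integral; as s* need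
   not be measurable, this uses monotonicity of the Lebesgue integral without
   measurability assumptions. *)

From HB Require Import structures.
From mathcomp Require Import all_boot all_order all_algebra.
From mathcomp Require Import all_classical all_reals all_analysis.
From mathcomp Require Import measurable_realfun ring.
Import Order.TTheory GRing.Theory Num.Theory.
Local Open Scope classical_set_scope.
Local Open Scope ring_scope.

Section integral_order.
Local Open Scope ereal_scope.
Context d (T : measurableType d) (R : realType) (mu : {measure set T -> \bar R}).

(* No measurability is needed: the integral of a nonnegative function is a
   supremum over the simple functions below it. *)
Lemma ge0_le_integral_nomeas (D : set T) (f g : T -> \bar R) :
  (forall x, D x -> 0 <= f x) -> (forall x, D x -> f x <= g x) ->
  \int[mu]_(x in D) f x <= \int[mu]_(x in D) g x.
Proof.
move=> f0 fg.
have g0 x : D x -> 0 <= g x by move=> Dx; exact: le_trans (f0 x Dx) (fg x Dx).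
rewrite (ge0_integralE mu f0) (ge0_integralE mu g0).
apply: ereal_sup_le => _ [k /= kf <-]; exists k => //= x.
apply: le_trans (kf x) _; rewrite /patch; case: ifPn => // /set_mem Dx.
exact: fg.
Qed.

Lemma le_integral_nomeas (D : set T) (f g : T -> \bar R) :
  (forall x, D x -> f x <= g x) ->
  \int[mu]_(x in D) f x <= \int[mu]_(x in D) g x.
Proof.
move=> fg; rewrite (integralE mu D f) (integralE mu D g).
have fg' : {in D, forall x, f x <= g x} by move=> x /set_mem; exact: fg.
apply: leeB; apply: ge0_le_integral_nomeas => x Dx.
- exact: funepos_ge0.
- by apply: (funepos_le fg'); exact/mem_set.
- exact: funeneg_ge0.
- by apply: (funeneg_le fg'); exact/mem_set.
Qed.

Lemma integral_gt0 (D : set T) (f : T -> \bar R) : measurable D ->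
  0 < mu D -> measurable_fun D f -> (forall x, D x -> 0 < f x) ->
  0 < \int[mu]_(x in D) f x.
Proof.
move=> mD muD mf fD.
rewrite lt_neqAle integral_ge0 ?andbT; last by move=> x Dx; rewrite ltW ?fD.
apply/negP => /eqP int0.
have : ae_eq mu D f (cst 0).
  apply/(ae_eq_integral_abs mu mD mf); rewrite int0.
  by apply: eq_integral => x /set_mem Dx; rewrite gee0_abs // ltW ?fD.
case=> N [mN muN fN].
have : mu D <= mu N.
  apply: le_measure; rewrite ?inE //=.
  by move=> x Dx; apply: fN => /(_ Dx) fx0; move: (fD x Dx); rewrite fx0 ltxx.
by rewrite muN leNgt muD.
Qed.

End integral_order.

Lemma ler_gap_ratio (R : realFieldType) (x a b a' b' : R) : 2^-1 < x ->
  0 <= a -> 0 <= b -> a <= a' -> b' <= b ->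
  0 < x * a - (1 - x) * b -> 0 < x * a' - (1 - x) * b' ->
  (a - b) / (x * a - (1 - x) * b) <= (a' - b') / (x * a' - (1 - x) * b').
Proof.
move=> x_gt a0 b0 aa' b'b den_gt0 den'_gt0.
rewrite ler_pdivrMr // mulrAC ler_pdivlMr //.
have x21 : 0 < 2 * x - 1 by rewrite subr_gt0 -ltr_pdivrMl ?mulr1.
have cross : 0 <= a' * b - a * b'.
  have -> : a' * b - a * b' = (a' - a) * b + a * (b - b') by ring.
  by rewrite addr_ge0 // mulr_ge0 // subr_ge0.
have -> : (a' - b') * (x * a - (1 - x) * b) =
    (a - b) * (x * a' - (1 - x) * b') + (2 * x - 1) * (a' * b - a * b') by ring.
by rewrite lerDl mulr_ge0 // ltW.
Qed.

Section troll_model.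
Variable R : realType.
Local Notation mu := (@lebesgue_measure R).

Lemma cdf_ge0 {G g : R -> R} (t : R) : cdf_with_density G g -> 0 <= G t.
Proof.
case=> _ gpos _ GE; rewrite -lee_fin GE.
by apply: integral_ge0 => y _; rewrite lee_fin ltW.
Qed.

Lemma cdf_gap_integral {F0 F1 f0 f1 : R -> R} (m c : R) :
  cdf_with_density F0 f0 -> cdf_with_density F1 f1 -> 0 <= m ->
  (forall t, t <= c -> f1 t <= m * f0 t) ->
  ((m * F0 c)%:E = (F1 c)%:E + \int[mu]_(t in `]-oo, c]) (m * f0 t - f1 t)%:E)%E.
Proof.
move=> [mf0 f0pos _ F0E] [mf1 f1pos _ F1E] m0 f1_le.
have mD : measurable [set` `]-oo, c]] by exact: measurable_itv.
have mEFin (u : R -> R) : measurable_fun setT u ->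
    measurable_fun [set` `]-oo, c]] (fun t => (u t)%:E).
  by move=> mfu; exact/measurable_EFinP/measurable_funTS.
have EFin_ge0 (u : R -> R) : (forall t, 0 < u t) ->
    forall t, [set` `]-oo, c]] t -> (0 <= (u t)%:E)%E.
  by move=> upos t _; rewrite lee_fin ltW.
have gap_ge0 t : [set` `]-oo, c]] t -> (0 <= (m * f0 t - f1 t)%:E)%E.
  by rewrite /= in_itv /= lee_fin subr_ge0; exact: f1_le.
have mgap : measurable_fun setT (fun t => m * f0 t - f1 t).
  by apply: measurable_funB => //; apply: measurable_funM.
rewrite EFinM F0E F1E -(ge0_integralZl_EFin mu mD (EFin_ge0 _ f0pos) (mEFin _ mf0) m0).
rewrite -(ge0_integralD mu mD (EFin_ge0 _ f1pos) (mEFin _ mf1) gap_ge0 (mEFin _ mgap)).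
by apply: eq_integral => t _; rewrite -EFinD addrC subrK -EFinM.
Qed.

(* Since the likelihood ratio m is increasing, m(c) f0 - f1 = (m(c) - m) f0 is
   positive on ]-oo, c[, so the gap m(c) F0(c) - F1(c) is positive. *)
Lemma cdf_lt_lik_ratio {F0 F1 f0 f1 : R -> R} (c : R) :
  info_structure F0 F1 f0 f1 -> F1 c < lik_ratio f0 f1 c * F0 c.
Proof.
case=> cF0 cF1 _ m_inc.
have [[mf0 f0pos _ _] [mf1 f1pos _ _]] := (cF0, cF1).
set m := lik_ratio f0 f1 c.
have gapE t : m * f0 t - f1 t = (m - lik_ratio f0 f1 t) * f0 t.
  by rewrite mulrBl /lik_ratio divfK ?gt_eqF.
have gap_gt0 t : t < c -> 0 < m * f0 t - f1 t.
  by move=> tc; rewrite gapE mulr_gt0 // subr_gt0 m_inc.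
have f1_le t : t <= c -> f1 t <= m * f0 t.
  rewrite le_eqVlt -subr_ge0 => /orP[/eqP -> | /gap_gt0/ltW //].
  by rewrite gapE subrr mul0r.
pose D : set R := [set` `]-oo, c]].
pose E : set R := [set` `]c - 1, c[].
have mD : measurable D by exact: measurable_itv.
have mE : measurable E by exact: measurable_itv.
have ED : E `<=` D by move=> t; rewrite /E /D /= !in_itv /= => /andP[_ /ltW].
have muE : (0 < mu E)%E.
  by rewrite /E lebesgue_measure_itv /= lte_fin gtrBl ltr01 -EFinB lte_fin subKr ltr01.
have mgap : measurable_fun setT (fun t => m * f0 t - f1 t).
  by apply: measurable_funB => //; apply: measurable_funM.
have gap_int_gt0 : (0 < \int[mu]_(t in D) (m * f0 t - f1 t)%:E)%E.
  apply: (lt_le_trans _ (ge0_subset_integral mu mE mD _ _ ED)).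
  - apply: integral_gt0 => //; first exact/measurable_EFinP/measurable_funTS.
    by move=> t; rewrite /E /= in_itv /= lte_fin => /andP[_ /gap_gt0].
  - exact/measurable_EFinP/measurable_funTS.
  - by move=> t; rewrite /D /= in_itv /= lee_fin subr_ge0 => /f1_le.
have m0 : 0 <= m by rewrite ltW // divr_gt0.
by rewrite -lte_fin (cdf_gap_integral m c cF0 cF1 m0 f1_le) lteDl.
Qed.

Lemma sstar_denom_gt0 {F0 F1 f0 f1 s : R -> R} {x : R} :
  info_structure F0 F1 f0 f1 -> is_sstar f0 f1 s -> 0 < x < 1 ->
  0 < x * F0 (s x) - (1 - x) * F1 (s x).
Proof.
move=> I S /[dup] x01 /andP[_ x1].
have x1' : 0 < 1 - x by rewrite subr_gt0.
have := cdf_lt_lik_ratio (s x) I; rewrite S // -(ltr_pM2l x1') mulrA.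
by rewrite mulrCA divff ?gt_eqF // mulr1 subr_gt0.
Qed.

End troll_model.

Lemma more_informative_ratio_term_le {R : realType}
    {F0 F1 f0 f1 s Fh0 Fh1 fh0 fh1 sh : R -> R} (x : R) :
  info_structure F0 F1 f0 f1 -> is_sstar f0 f1 s ->
  info_structure Fh0 Fh1 fh0 fh1 -> is_sstar fh0 fh1 sh ->
  more_informative Fh0 Fh1 sh F0 F1 s -> 2^-1 < x < 1 ->
  ratio_term F0 F1 s x <= ratio_term Fh0 Fh1 sh x.
Proof.
move=> I S Ih Sh MI /andP[x_gt x1].
have x01 : 0 < x < 1 by rewrite x1 andbT (lt_trans _ x_gt) ?invr_gt0.
have [F0_le Fh1_le] := MI x x01.
have [cF0 cF1 _ _] := I.
apply: ler_gap_ratio => //.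
- exact: cdf_ge0 cF0.
- exact: cdf_ge0 cF1.
- exact: sstar_denom_gt0 I S x01.
- exact: sstar_denom_gt0 Ih Sh x01.
Qed.

Theorem proposition2 (R : realType) (H h : R -> R)
    (F0 F1 f0 f1 s Fh0 Fh1 fh0 fh1 sh : R -> R) :
  cdf_with_density H h ->
  info_structure F0 F1 f0 f1 -> is_sstar f0 f1 s ->
  info_structure Fh0 Fh1 fh0 fh1 -> is_sstar fh0 fh1 sh ->
  more_informative Fh0 Fh1 sh F0 F1 s ->
  (Vstar0 H h F0 F1 s <= Vstar0 H h Fh0 Fh1 sh)%E /\
  (Vstar1 H h F0 F1 s <= Vstar1 H h Fh0 Fh1 sh)%E.
Proof.
move=> [_ hpos _ _] I S Ih Sh MI.
have weighted_le (w : R -> R) : (forall x, 2^-1 < x < 1 -> 0 <= w x) ->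
    (\int[lebesgue_measure]_(x in [set x : R | (2^-1 < x < 1)%R])
       (ratio_term F0 F1 s x * w x * h x)%:E <=
     \int[lebesgue_measure]_(x in [set x : R | (2^-1 < x < 1)%R])
       (ratio_term Fh0 Fh1 sh x * w x * h x)%:E)%E.
  move=> w_ge0; apply: le_integral_nomeas => x x_in.
  rewrite lee_fin ler_wpM2r ?(ltW (hpos x)) // ler_wpM2r ?w_ge0 //.
  exact: more_informative_ratio_term_le I S Ih Sh MI x_in.
split; rewrite leeD2l //; apply: weighted_le => x /andP[x_gt x1].
- by rewrite subr_ge0 ltW.
- by rewrite ltW // (lt_trans _ x_gt) ?invr_gt0.
Qed.
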